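(* Let $n_1,n_2\ge1$, $n=n_1+n_2-1$, and let $\bm z^\natural\in\mathbb C^n$ be such that $\mathcal G\bm z^\natural$ has rank $r$ and compact SVD $\mathcal G\bm z^\natural=\bm U^\natural\bm\Sigma^\natural\bm V^{\natural*}$ satisfying $\|\bm U^\natural\|_{2,\infty}\le\sqrt{\mu c_s r/n}$ and $\|\bm V^\natural\|_{2,\infty}\le\sqrt{\mu c_s r/n}$, where $c_s=\max\{n/n_1,n/n_2\}$. Let $\Omega\subseteq[n]$ be random, each index included independently with probability $p$. There exists a universal constant $c_0>0$ such that, provided $p\ge(\mu c_s r\log n)/n$, $$\big\|(p^{-1}\mathcal G\Pi_\Omega-\mathcal G)\bm z^\natural\big\|_2\ \le\ c_0\sqrt{\frac{p^{-1}\mu c_s r\log n}{n}}\ \|\mathcal G\bm z^\natural\|_2$$ holds with probability at least $1-2n^{-2}$.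
   Context: $\mathcal H:\mathbb C^n\to\mathbb C^{n_1\times n_2}$ is the Hankel map $[\mathcal H\bm x]_{i,j}=x_{i+j-1}$; $\varsigma_t=\#\{(i,j)\in[n_1]\times[n_2]:i+j-1=t\}$; $\mathcal D\bm x$ has entries $\sqrt{\varsigma_t}x_t$; $\mathcal G=\mathcal H\mathcal D^{-1}$. $\Pi_\Omega$ keeps the entries of a vector indexed by $\Omega$ and zeroes the others. $\|\cdot\|_2$ on matrices is the spectral norm and $\|\cdot\|_{2,\infty}$ is the largest row $\ell_2$-norm. *)

From HB Require Import structures.
From mathcomp Require Import all_boot all_order all_algebra.
From mathcomp Require Import all_classical all_reals.
From mathcomp Require Import exp.
From mathcomp Require Import complex.
Set Implicit Arguments. Unset Strict Implicit. Unset Printing Implicit Defensive.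
Import Order.TTheory GRing.Theory Num.Theory.
Local Open Scope ring_scope.

Section Defs.
Variable R : realType.
Local Notation C := R[i].

(* x_k (0-indexed) if k < n, and 0 otherwise *)
Definition vget (n : nat) (x : 'cV[C]_n) (k : nat) : C :=
  \sum_(t < n | val t == k) x t ord0.

Definition hankel (n1 n2 n : nat) (x : 'cV[C]_n) : 'M[C]_(n1, n2) :=
  \matrix_(i < n1, j < n2) vget x (i + j).

Definition varsigma (n1 n2 t : nat) : nat :=
  #|[set ij : 'I_n1 * 'I_n2 | (val ij.1 + val ij.2 == t)%N]|.

Definition Dop (n1 n2 n : nat) (x : 'cV[C]_n) : 'cV[C]_n :=
  \col_(t < n) (sqrtC ((varsigma n1 n2 t)%:R : C) * x t ord0).

Definition Dinv (n1 n2 n : nat) (x : 'cV[C]_n) : 'cV[C]_n :=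
  \col_(t < n) (x t ord0 / sqrtC ((varsigma n1 n2 t)%:R : C)).

Definition Gop (n1 n2 n : nat) (x : 'cV[C]_n) : 'M[C]_(n1, n2) :=
  hankel n1 n2 (Dinv n1 n2 x).

Definition PiOmega (n : nat) (S : {set 'I_n}) (x : 'cV[C]_n) : 'cV[C]_n :=
  \col_(t < n) (if t \in S then x t ord0 else 0).

Definition adjmx (m k : nat) (A : 'M[C]_(m, k)) : 'M[C]_(k, m) :=
  (map_mx (@conjc R) A)^T.

Definition vnorm (m : nat) (v : 'cV[C]_m) : R :=
  Num.sqrt (\sum_(i < m) ComplexField.Normc.normc (v i ord0) ^+ 2).

Definition specnorm (m k : nat) (A : 'M[C]_(m, k)) : R :=
  sup [set vnorm (A *m x) | x in [set x : 'cV[C]_k | vnorm x <= 1]].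

Definition norm2inf (m k : nat) (A : 'M[C]_(m, k)) : R :=
  \big[Num.max/0]_(i < m) vnorm (row i A)^T.

(* Bernoulli(p) random subset of [n]: probability of an event E *)
Definition bern_prob (n : nat) (p : R) (E : pred {set 'I_n}) : R :=
  \sum_(S : {set 'I_n} | E S) p ^+ #|S| * (1 - p) ^+ (n - #|S|).

End Defs.

(* G z is the Hankel matrix of g := D^-1 z, and the sampling error
   p^-1 G Pi_Omega z - G z is the Hankel matrix of ((t \in Omega) / p - 1) g_t.
   An n1 x n2 Hankel matrix is a corner of an n x n circulant: by DFT inversion,
   Cauchy-Schwarz and Parseval its spectral norm is at most the largest modulus
   of the DFT of its generating sequence.  The real and imaginary parts of each
   DFT coefficient of the error, with both signs, are sums of independent centred
   terms bounded by |g_t|.  Incoherence gives |g_t| <= a ||G z|| and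
   sum_t |g_t|^2 <= 2 a ||G z||^2 with a = mu c_s r / n (read g off the first row
   and the last column of G z), so a Chernoff bound makes each of these 4 n sums
   exceed its threshold with probability at most n^-4, and a union bound gives
   the claim with c0 = 16. *)

From HB Require Import structures.
From mathcomp Require Import all_boot all_order all_algebra.
From mathcomp Require Import all_classical all_reals.
From mathcomp Require Import sequences exp.
From mathcomp Require Import complex.
From mathcomp Require Import ring lra zify.
From mathcomp Require Import separable cyclic cyclotomic.
Import Order.TTheory GRing.Theory Num.Theory.
Set Implicit Arguments. Unset Strict Implicit. Unset Printing Implicit Defensive.
Local Open Scope ring_scope.
Local Open Scope complex_scope.
Local Notation normc := ComplexField.Normc.normc.

Section Norms.
Variable R : realType.
Local Notation C := R[i].

Lemma normc_ge0 (x : C) : 0 <= normc x.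
Proof. by case: x => a b; exact: sqrtr_ge0. Qed.

Lemma normC_normc (x : C) : `|x| = (normc x)%:C.
Proof. by case: x. Qed.

Lemma sqr_normcE (x : C) : (normc x ^+ 2)%:C = x * conjc x.
Proof. by rewrite rmorphXn /= -normC_normc sqr_normc. Qed.

Lemma sum_sqr_normcE (I : finType) (f : I -> C) :
  (\sum_i normc (f i) ^+ 2)%:C = \sum_i f i * conjc (f i).
Proof. by rewrite rmorph_sum; apply: eq_bigr => i _; exact: sqr_normcE. Qed.

Lemma normc_conj (x : C) : normc (conjc x) = normc x.
Proof. by case: x => a b /=; rewrite sqrrN. Qed.

Lemma normc_real (c : R) : normc c%:C = `|c|.
Proof. by rewrite /= expr0n /= addr0 sqrtr_sqr. Qed.

Lemma normc_sum_le (I : finType) (f : I -> C) :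
  normc (\sum_i f i) <= \sum_i normc (f i).
Proof.
rewrite -lecR -normC_normc rmorph_sum /=.
by apply: le_trans (ler_norm_sum _ _ _) _; apply: ler_sum => i _; rewrite normC_normc.
Qed.

Lemma sum_sqr_ge0 (I : finType) (c : I -> R) : 0 <= \sum_i c i ^+ 2.
Proof. by apply: sumr_ge0 => i _; exact: sqr_ge0. Qed.

Lemma sum_sqr_eq0 (I : finType) (c : I -> R) :
  \sum_i c i ^+ 2 = 0 -> forall i, c i = 0.
Proof.
move=> /psumr_eq0P c0 i; apply/eqP; rewrite -sqrf_eq0; apply/eqP.
by apply: c0 => // j _; exact: sqr_ge0.
Qed.

Lemma cauchy_schwarz_sum (I : finType) (a b : I -> R) :
  \sum_i a i * b i <= Num.sqrt (\sum_i a i ^+ 2) * Num.sqrt (\sum_i b i ^+ 2).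
Proof.
set A := \sum_i a i ^+ 2; set B := \sum_i b i ^+ 2.
have [/sum_sqr_eq0 a0|A0] := eqVneq A 0.
  by rewrite big1 ?mulr_ge0 ?sqrtr_ge0 // => i _; rewrite a0 mul0r.
have [/sum_sqr_eq0 b0|B0] := eqVneq B 0.
  by rewrite big1 ?mulr_ge0 ?sqrtr_ge0 // => i _; rewrite b0 mulr0.
have sA0 : 0 < Num.sqrt A by rewrite sqrtr_gt0 lt_def A0 sum_sqr_ge0.
have sB0 : 0 < Num.sqrt B by rewrite sqrtr_gt0 lt_def B0 sum_sqr_ge0.
set sA := Num.sqrt A in sA0 *; set sB := Num.sqrt B in sB0 *.
(* Expand [0 <= \sum_i (a i * sB - b i * sA) ^+ 2]. *)
have key : 2 * sA * sB * (\sum_i a i * b i) <= 2 * sA * sB * (sA * sB).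
  have -> : 2 * sA * sB * (sA * sB) = \sum_i (a i ^+ 2 * sB ^+ 2 + b i ^+ 2 * sA ^+ 2).
    have sAA : sA ^+ 2 = A by rewrite sqr_sqrtr ?sum_sqr_ge0.
    have sBB : sB ^+ 2 = B by rewrite sqr_sqrtr ?sum_sqr_ge0.
    by rewrite big_split /= -!mulr_suml -/A -/B -sAA -sBB; ring.
  rewrite mulr_sumr; apply: ler_sum => i _.
  have := sqr_ge0 (a i * sB - b i * sA); lra.
by rewrite -(ler_pM2l (_ : 0 < 2 * sA * sB)) // !mulr_gt0.
Qed.

Lemma normc_sum_mul_le (I : finType) (f h : I -> C) :
  normc (\sum_i f i * h i) <=
  Num.sqrt (\sum_i normc (f i) ^+ 2) * Num.sqrt (\sum_i normc (h i) ^+ 2).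
Proof.
apply: le_trans (normc_sum_le _) _.
under eq_bigr do rewrite ComplexField.Normc.normcM.
exact: cauchy_schwarz_sum.
Qed.

End Norms.

Section VectorNorm.
Variable R : realType.
Local Notation C := R[i].

Definition sqnorm (m : nat) (v : 'cV[C]_m) : R := \sum_i normc (v i ord0) ^+ 2.

Lemma vnormE m (v : 'cV[C]_m) : vnorm v = Num.sqrt (sqnorm v).
Proof. by []. Qed.

Lemma sqnorm_ge0 m (v : 'cV[C]_m) : 0 <= sqnorm v.
Proof. exact: sum_sqr_ge0. Qed.

Lemma vnorm_ge0 m (v : 'cV[C]_m) : 0 <= vnorm v.
Proof. exact: sqrtr_ge0. Qed.

Lemma sqr_vnorm m (v : 'cV[C]_m) : vnorm v ^+ 2 = sqnorm v.
Proof. by rewrite sqr_sqrtr // sqnorm_ge0. Qed.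

Lemma vnorm_le m (v : 'cV[C]_m) (y : R) : 0 <= y -> sqnorm v <= y ^+ 2 -> vnorm v <= y.
Proof. by move=> y0 vy; rewrite -(ger0_norm y0) -sqrtr_sqr ler_sqrt // sqr_ge0. Qed.

Lemma sqnorm_eq0 m (v : 'cV[C]_m) : sqnorm v = 0 -> v = 0.
Proof.
move=> /sum_sqr_eq0 v0; apply/matrixP => i j; rewrite (ord1 j) mxE.
exact/ComplexField.Normc.eq0_normc/v0.
Qed.

Lemma vnorm0 m : vnorm (0 : 'cV[C]_m) = 0.
Proof.
by rewrite /vnorm big1 ?sqrtr0 // => i _; rewrite mxE ComplexField.Normc.normc0 expr0n.
Qed.

Lemma sqnormE m (v : 'cV[C]_m) : (sqnorm v)%:C = (adjmx v *m v) ord0 ord0.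
Proof.
rewrite sum_sqr_normcE mxE; apply: eq_bigr => i _.
by rewrite !mxE mulrC.
Qed.

Lemma adjmxM m k l (A : 'M[C]_(m, k)) (B : 'M[C]_(k, l)) :
  adjmx (A *m B) = adjmx B *m adjmx A.
Proof. by rewrite /adjmx map_mxM trmx_mul. Qed.

Lemma vnorm_isometry m r (U : 'M[C]_(m, r)) (v : 'cV[C]_r) :
  adjmx U *m U = 1%:M -> vnorm (U *m v) = vnorm v.
Proof.
move=> UU; rewrite !vnormE; congr Num.sqrt; apply: complexI.
by rewrite !sqnormE adjmxM -mulmxA (mulmxA (adjmx U)) UU mul1mx.
Qed.

Lemma vnormZ m (c : R) (v : 'cV[C]_m) : 0 <= c -> vnorm (c%:C *: v) = c * vnorm v.
Proof.
move=> c0; rewrite !vnormE /sqnorm.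
under eq_bigr do rewrite mxE ComplexField.Normc.normcM normc_real exprMn.
by rewrite -mulr_sumr sqrtrM ?sqr_ge0 // sqrtr_sqr normr_id ger0_norm.
Qed.

Lemma sqnorm_mul_le m k (A : 'M[C]_(m, k)) (x : 'cV[C]_k) :
  sqnorm (A *m x) <= (\sum_i \sum_j normc (A i j) ^+ 2) * sqnorm x.
Proof.
rewrite /sqnorm mulr_suml; apply: ler_sum => i _; rewrite mxE.
apply: le_trans (_ : (Num.sqrt (\sum_j normc (A i j) ^+ 2) *
                      Num.sqrt (\sum_j normc (x j ord0) ^+ 2)) ^+ 2 <= _).
  by rewrite ler_pXn2r ?nnegrE ?normc_ge0 ?mulr_ge0 ?sqrtr_ge0 ?normc_sum_mul_le.
by rewrite exprMn !sqr_sqrtr ?sum_sqr_ge0.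
Qed.

End VectorNorm.

Section SpectralNorm.
Variable R : realType.
Local Notation C := R[i].
Variables (m k : nat) (A : 'M[C]_(m, k)).

Lemma specnorm_has_ubound :
  has_ubound [set vnorm (A *m x) | x in [set x : 'cV[C]_k | vnorm x <= 1]].
Proof.
have F0 : 0 <= \sum_i \sum_j normc (A i j) ^+ 2.
  by apply: sumr_ge0 => i _; exact: sum_sqr_ge0.
exists (Num.sqrt (\sum_i \sum_j normc (A i j) ^+ 2)) => _ [x /= x1 <-].
apply: vnorm_le; first exact: sqrtr_ge0.
rewrite sqr_sqrtr //; apply: le_trans (sqnorm_mul_le A x) _.
rewrite ler_piMr // -sqr_vnorm -(expr1n _ 2) ler_pXn2r ?nnegrE ?vnorm_ge0 //.
Qed.

Lemma vnorm_le_specnorm x : vnorm x <= 1 -> vnorm (A *m x) <= specnorm A.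
Proof. by move=> x1; apply: ub_le_sup; [exact: specnorm_has_ubound | exists x]. Qed.

Lemma specnorm_ge0 : 0 <= specnorm A.
Proof.
by apply: le_trans (vnorm_ge0 (A *m 0)) (vnorm_le_specnorm _); rewrite vnorm0 ler01.
Qed.

Lemma vnorm_mul_le x : vnorm (A *m x) <= specnorm A * vnorm x.
Proof.
have [x0|] := eqVneq (sqnorm x) 0; first by rewrite (sqnorm_eq0 x0) mulmx0 !vnorm0 mulr0.
rewrite -sqr_vnorm sqrf_eq0 => /negPf xn0.
have x0 : 0 < vnorm x by rewrite lt_def xn0 vnorm_ge0.
have := @vnorm_le_specnorm ((vnorm x)^-1%:C *: x).
rewrite -scalemxAr !vnormZ ?invr_ge0 ?(ltW x0) // mulVf ?xn0 // lexx.
by rewrite ler_pdivrMl // => /(_ isT); rewrite mulrC.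
Qed.

Lemma specnorm_le B : 0 <= B -> (forall x, vnorm (A *m x) <= B * vnorm x) -> specnorm A <= B.
Proof.
move=> B0 AB; apply: ge_sup; first by exists (vnorm (A *m 0)), 0; rewrite //= vnorm0.
by move=> _ [x /= x1 <-]; apply: le_trans (AB x) _; rewrite ler_piMr.
Qed.

End SpectralNorm.

Lemma specnorm0 (R : realType) m k : specnorm (0 : 'M[R[i]]_(m, k)) = 0.
Proof.
apply/eqP; rewrite eq_le specnorm_ge0 andbT.
by apply: specnorm_le => // x; rewrite mul0mx vnorm0 mul0r.
Qed.

Section Incoherence.
Variable R : realType.
Local Notation C := R[i].

Definition rownorm m k (U : 'M[C]_(m, k)) i := vnorm (row i U)^T.

Lemma rownormE m k (U : 'M[C]_(m, k)) i :
  rownorm U i = Num.sqrt (\sum_j normc (U i j) ^+ 2).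
Proof. by congr Num.sqrt; apply: eq_bigr => j _; rewrite !mxE. Qed.

Lemma rownorm_ge0 m k (U : 'M[C]_(m, k)) i : 0 <= rownorm U i.
Proof. exact: vnorm_ge0. Qed.

Lemma rownorm_le_norm2inf m k (U : 'M[C]_(m, k)) i : rownorm U i <= norm2inf U.
Proof. exact: le_bigmax. Qed.

Variables (m1 m2 r : nat) (U : 'M[C]_(m1, r)) (V : 'M[C]_(m2, r)) (A : 'M[C]_(m1, m2)).
Hypothesis UU : adjmx U *m U = 1%:M.
Hypothesis VV : adjmx V *m V = 1%:M.
Hypothesis AU : U *m (adjmx U *m A) = A.
Hypothesis AV : A *m (V *m adjmx V) = A.

Lemma normc_mulmx_entry_le i (y : 'cV[C]_m2) :
  normc ((A *m y) i ord0) <= rownorm U i * vnorm (A *m y).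
Proof.
have Ay : A *m y = U *m (adjmx U *m A *m y) by rewrite !mulmxA -(mulmxA U) AU.
rewrite {1}Ay mxE Ay (vnorm_isometry _ UU) rownormE vnormE.
exact: normc_sum_mul_le.
Qed.

Lemma vnorm_col_le j : vnorm (col j A) <= specnorm A * rownorm V j.
Proof.
have -> : col j A = A *m (V *m (adjmx V *m delta_mx j ord0)).
  by rewrite colE !mulmxA -(mulmxA A) AV.
apply: le_trans (vnorm_mul_le _ _) _; rewrite (vnorm_isometry _ VV) -colE.
suff -> : vnorm (col j (adjmx V)) = rownorm V j by [].
by rewrite rownormE; congr Num.sqrt; apply: eq_bigr => k _; rewrite !mxE normc_conj.
Qed.

Lemma normc_entry_le i j : normc (A i j) <= rownorm U i * specnorm A * rownorm V j.
Proof.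
have := normc_mulmx_entry_le i (delta_mx j ord0); rewrite -colE mxE => /le_trans; apply.
by rewrite -mulrA ler_wpM2l ?rownorm_ge0 ?vnorm_col_le.
Qed.

Lemma sum_col_le j : \sum_i normc (A i j) ^+ 2 <= (specnorm A * rownorm V j) ^+ 2.
Proof.
have -> : \sum_i normc (A i j) ^+ 2 = sqnorm (col j A) by apply: eq_bigr => i _; rewrite mxE.
rewrite -sqr_vnorm ler_pXn2r ?nnegrE ?vnorm_ge0 ?vnorm_col_le //.
by rewrite mulr_ge0 ?specnorm_ge0 ?rownorm_ge0.
Qed.

Lemma sum_row_le i : \sum_j normc (A i j) ^+ 2 <= (rownorm U i * specnorm A) ^+ 2.
Proof.
set s := \sum_j _; set c := rownorm U i * specnorm A.
have s0 : 0 <= s := sum_sqr_ge0 _.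
have c0 : 0 <= c by rewrite mulr_ge0 ?rownorm_ge0 ?specnorm_ge0.
pose y := adjmx (row i A).
have Ay : (A *m y) i ord0 = s%:C.
  rewrite mxE rmorph_sum; apply: eq_bigr => j _.
  by rewrite !mxE; apply/esym/(etrans (sqr_normcE _)).
have y_s : vnorm y = Num.sqrt s.
  by congr Num.sqrt; apply: eq_bigr => j _; rewrite !mxE normc_conj.
have s_le : s <= c * Num.sqrt s.
  have := normc_mulmx_entry_le i y; rewrite Ay normc_real ger0_norm // => /le_trans; apply.
  by rewrite -mulrA ler_wpM2l ?rownorm_ge0 // -y_s vnorm_mul_le.
rewrite -(sqr_sqrtr s0) ler_pXn2r ?nnegrE ?sqrtr_ge0 //.
have [s_eq0|s_neq0] := eqVneq s 0; first by rewrite s_eq0 sqrtr0.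
have ss0 : 0 < Num.sqrt s by rewrite sqrtr_gt0 lt_def s_neq0.
by rewrite -(ler_pM2r ss0) -expr2 sqr_sqrtr.
Qed.

End Incoherence.

Lemma svd_colspace (R : realType) m1 m2 r (U : 'M[R[i]]_(m1, r)) (sigma : 'rV_r)
    (V : 'M_(m2, r)) :
  adjmx U *m U = 1%:M -> U *m (adjmx U *m (U *m diag_mx sigma *m adjmx V)) =
                         U *m diag_mx sigma *m adjmx V.
Proof. by move=> UU; rewrite !mulmxA -(mulmxA U) UU mulmx1. Qed.

Lemma svd_rowspace (R : realType) m1 m2 r (U : 'M[R[i]]_(m1, r)) (sigma : 'rV_r)
    (V : 'M_(m2, r)) :
  adjmx V *m V = 1%:M -> U *m diag_mx sigma *m adjmx V *m (V *m adjmx V) =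
                         U *m diag_mx sigma *m adjmx V.
Proof. by move=> VV; rewrite mulmxA -(mulmxA _ (adjmx V)) VV mulmx1. Qed.

Lemma closed_prim_root_exists (F : closedFieldType) n :
  (0 < n)%N -> n%:R != 0 :> F -> exists om : F, n.-primitive_root om.
Proof.
move=> n_gt0 n_neq0; pose p : {poly F} := 'X^n - 1.
have [r Dp] := closed_field_poly_normal p.
rewrite (monicP _) ?monicXnsubC // scale1r in Dp.
have rn1 : all n.-unity_root r by apply/allP=> z; rewrite -root_prod_XsubC -Dp.
have sz_r : (n < (size r).+1)%N by rewrite -(size_prod_XsubC r id) -Dp size_XnsubC.
have [|om] := hasP (has_prim_root n_gt0 rn1 _ sz_r); last by exists om.
by rewrite -separable_prod_XsubC -Dp separable_Xn_sub_1.
Qed.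

Section RootsOfUnity.
Variable R : realType.
Local Notation C := R[i].

Lemma sum_unity_root (x : C) n : x ^+ n = 1 ->
  \sum_(k < n) x ^+ k = if x == 1 then n%:R else 0.
Proof.
move=> xn; have [->|x1] := eqVneq x 1.
  by rewrite (eq_bigr (fun _ => 1)) ?sumr_const ?card_ord // => k _; rewrite expr1n.
apply/eqP; have /esym/eqP := subrX1 x n.
by rewrite xn subrr mulf_eq0 subr_eq0 (negbTE x1).
Qed.

Variables (n : nat) (om : C).
Hypothesis om_prim : n.-primitive_root om.

Lemma norm_prim_rootX k : `|om ^+ k| = 1.
Proof.
have n_gt0 := prim_order_gt0 om_prim.
have /eqP om1 : `|om| == 1.
  by rewrite -(pexpr_eq1 n_gt0) // -normrX (prim_expr_order om_prim) normr1.
by rewrite normrX om1 expr1n.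
Qed.

Lemma normc_mul_prim_rootX (c : C) k : normc (c * om ^+ k) = normc c.
Proof.
by apply: complexI; rewrite -!normC_normc normrM norm_prim_rootX mulr1.
Qed.

Lemma conj_prim_rootX k : conjc (om ^+ k) = (om ^+ k)^-1.
Proof. by rewrite invc_norm norm_prim_rootX expr1n invr1 mul1r. Qed.

Lemma sum_prim_root_orthogonal t m : (t < n)%N -> (m < n)%N ->
  \sum_(k < n) om ^+ (k * t) * conjc (om ^+ (k * m)) = (t == m)%:R * n%:R.
Proof.
move=> tn mn; set x := om ^+ t * conjc (om ^+ m).
have omm0 : om ^+ m != 0 by rewrite -normr_eq0 norm_prim_rootX oner_eq0.
have x1 : (x == 1) = (t == m).
  rewrite /x conj_prim_rootX -(inj_eq (mulIf omm0)) mulfVK // mul1r.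
  by rewrite (eq_prim_root_expr om_prim) !modn_small.
have xn : x ^+ n = 1.
  rewrite /x conj_prim_rootX exprMn exprVn -!exprM !(mulnC _ n) !exprM.
  by rewrite (prim_expr_order om_prim) !expr1n invr1 mulr1.
transitivity (\sum_(k < n) x ^+ k).
  apply: eq_bigr => k _; rewrite exprMn -!exprM !(mulnC k) -rmorphXn /= -exprM.
  by rewrite mulnC.
by rewrite sum_unity_root // x1; case: (t == m); rewrite ?mul1r ?mul0r.
Qed.

Definition dft m (a : 'I_m -> C) (k : nat) : C := \sum_i a i * om ^+ (k * i).

Lemma dft_inversion (a : 'I_n -> C) (t : 'I_n) :
  \sum_(k < n) dft a k * conjc (om ^+ (k * t)) = n%:R * a t.
Proof.
transitivity (\sum_s a s * ((s == t)%:R * n%:R)).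
  under eq_bigr do rewrite big_distrl /=.
  rewrite exchange_big; apply: eq_bigr => s _ /=.
  rewrite -sum_prim_root_orthogonal ?ltn_ord // big_distrr; apply: eq_bigr => k _ /=.
  by rewrite mulrA.
rewrite (bigD1 t) //= eqxx mul1r big1 ?addr0 1?mulrC // => s /negPf st.
by rewrite st mul0r mulr0.
Qed.

Lemma parseval m (a : 'I_m -> C) : (m <= n)%N ->
  \sum_(k < n) normc (dft a k) ^+ 2 = n%:R * \sum_i normc (a i) ^+ 2.
Proof.
move=> mn; apply: complexI; rewrite rmorphM /= rmorph_nat !sum_sqr_normcE.
transitivity (\sum_i \sum_j a i * conjc (a j) * ((i == j)%:R * n%:R)).
  under eq_bigr => k _.
    rewrite /dft rmorph_sum big_distrl /=.
    under eq_bigr => i _ do rewrite big_distrr /=.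
  over.
  rewrite exchange_big; apply: eq_bigr => i _ /=; rewrite exchange_big; apply: eq_bigr => j _ /=.
  rewrite -sum_prim_root_orthogonal ?(leq_trans (ltn_ord _) mn) // mulr_sumr.
  by apply: eq_bigr => k _; rewrite rmorphM /=; ring.
rewrite mulr_sumr; apply: eq_bigr => i _.
rewrite (bigD1 i) //= eqxx mul1r big1 ?addr0 1?mulrC // => j ji.
by rewrite eq_sym (negPf ji) mul0r mulr0.
Qed.

End RootsOfUnity.

Lemma add_ord_lt n1 n2 (i : 'I_n1) (j : 'I_n2) : (i + j < (n1 + n2).-1)%N.
Proof. have := ltn_ord i; have := ltn_ord j; lia. Qed.

Section HankelNorm.
Variable R : realType.
Local Notation C := R[i].
Variables (n1 n2 : nat) (om : C).
Local Notation n := (n1 + n2).-1.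
Hypotheses (n1_gt0 : (0 < n1)%N) (n2_gt0 : (0 < n2)%N).
Hypothesis om_prim : n.-primitive_root om.

Lemma hankelE (x : 'cV[C]_n) i j : hankel n1 n2 x i j = x (Ordinal (add_ord_lt i j)) ord0.
Proof. by rewrite mxE /vget (big_pred1 (Ordinal (add_ord_lt i j))). Qed.

Lemma hankel0 : hankel n1 n2 (0 : 'cV[C]_n) = 0.
Proof. by apply/matrixP => i j; rewrite hankelE !mxE. Qed.

Lemma hankel_formE (x : 'cV[C]_n) (y : 'cV[C]_n1) (v : 'cV[C]_n2) :
  (adjmx y *m hankel n1 n2 x *m v) ord0 ord0 =
  \sum_i \sum_j conjc (y i ord0) * x (Ordinal (add_ord_lt i j)) ord0 * v j ord0.
Proof.
rewrite mxE; under eq_bigr do rewrite mxE big_distrl /=.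
rewrite exchange_big; apply: eq_bigr => i _; apply: eq_bigr => j _ /=.
by rewrite hankelE !mxE.
Qed.

Lemma hankel_form_dft (x : 'cV[C]_n) (y : 'cV[C]_n1) (v : 'cV[C]_n2) :
  n%:R * (adjmx y *m hankel n1 n2 x *m v) ord0 ord0 =
  \sum_(k < n) dft om (fun t => x t ord0) k * conjc (dft om (fun i => y i ord0) k)
                 * conjc (dft om (fun j => conjc (v j ord0)) k).
Proof.
transitivity (\sum_i \sum_j \sum_(k < n) dft om (fun t => x t ord0) k
                 * (conjc (y i ord0) * conjc (om ^+ (k * i)))
                 * (v j ord0 * conjc (om ^+ (k * j)))).
  rewrite hankel_formE mulr_sumr; apply: eq_bigr => i _; rewrite mulr_sumr.
  apply: eq_bigr => j _.
  transitivity (conjc (y i ord0) * (n%:R * x (Ordinal (add_ord_lt i j)) ord0) * v j ord0).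
    by ring.
  rewrite -(dft_inversion om_prim (fun t => x t ord0)) big_distrr big_distrl.
  apply: eq_bigr => k _ /=.
  by rewrite mulnDr exprD rmorphM /=; ring.
under eq_bigr do rewrite exchange_big.
rewrite exchange_big; apply: eq_bigr => k _ /=.
rewrite !rmorph_sum -mulrA big_distrlr mulr_sumr; apply: eq_bigr => i _.
rewrite mulr_sumr; apply: eq_bigr => j _.
by rewrite !rmorphM /= conjcK -mulrA.
Qed.

Lemma normc_hankel_form_le (x : 'cV[C]_n) (y : 'cV[C]_n1) (v : 'cV[C]_n2) (B : R) :
  (forall k : 'I_n, normc (dft om (fun t => x t ord0) k) <= B) ->
  normc ((adjmx y *m hankel n1 n2 x *m v) ord0 ord0) <= B * (vnorm y * vnorm v).
Proof.
move=> xB; have n_gt0 := prim_order_gt0 om_prim.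
have B0 : 0 <= B := le_trans (normc_ge0 _) (xB (Ordinal n_gt0)).
have nR_gt0 : (0 : R) < n%:R by rewrite ltr0n.
have Py : \sum_(k < n) normc (dft om (fun i => y i ord0) k) ^+ 2 = n%:R * vnorm y ^+ 2.
  by rewrite (parseval om_prim) ?sqr_vnorm //; lia.
have Pv : \sum_(k < n) normc (dft om (fun j => conjc (v j ord0)) k) ^+ 2 = n%:R * vnorm v ^+ 2.
  rewrite (parseval om_prim) ?sqr_vnorm; last by lia.
  by congr (_ * _); apply: eq_bigr => j _; rewrite normc_conj.
rewrite -(ler_pM2l nR_gt0).
have -> : n%:R * normc ((adjmx y *m hankel n1 n2 x *m v) ord0 ord0) =
          normc (n%:R * (adjmx y *m hankel n1 n2 x *m v) ord0 ord0).
  by rewrite ComplexField.Normc.normcM -(rmorph_nat (real_complex R)) normc_real ger0_norm ?ler0n.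
rewrite hankel_form_dft; apply: le_trans (normc_sum_le _) _.
apply: le_trans (_ : \sum_(k < n) B * (normc (dft om (fun i => y i ord0) k) *
                     normc (dft om (fun j => conjc (v j ord0)) k)) <= _).
  apply: ler_sum => k _; rewrite !ComplexField.Normc.normcM !normc_conj -mulrA.
  by rewrite ler_wpM2r ?mulr_ge0 ?normc_ge0 ?xB.
rewrite -mulr_sumr; apply: le_trans (ler_wpM2l B0 (cauchy_schwarz_sum _ _)) _.
rewrite Py Pv !(sqrtrM _ (ler0n R n)) !sqrtr_sqr !ger0_norm ?vnorm_ge0 //.
have -> : B * (Num.sqrt n%:R * vnorm y * (Num.sqrt n%:R * vnorm v)) =
          Num.sqrt n%:R ^+ 2 * (B * (vnorm y * vnorm v)) by ring.
by rewrite sqr_sqrtr ?ler0n.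
Qed.

Lemma specnorm_hankel_le (x : 'cV[C]_n) (B : R) :
  (forall k : 'I_n, normc (dft om (fun t => x t ord0) k) <= B) ->
  specnorm (hankel n1 n2 x) <= B.
Proof.
move=> xB; have B0 : 0 <= B := le_trans (normc_ge0 _) (xB (Ordinal (prim_order_gt0 om_prim))).
apply: specnorm_le => // v; set y := hankel n1 n2 x *m v.
have := normc_hankel_form_le y v xB.
rewrite -mulmxA -/y -sqnormE normc_real ger0_norm ?sqnorm_ge0 // -sqr_vnorm.
have [y0|y_neq0] := eqVneq (vnorm y) 0; first by rewrite y0 mulr_ge0 ?vnorm_ge0.
have y_gt0 : 0 < vnorm y by rewrite lt_def y_neq0 vnorm_ge0.
by rewrite expr2 mulrCA ler_pM2l.
Qed.

End HankelNorm.

Section Bernoulli.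
Variable R : realType.
Variables (n : nat) (p : R).

Definition bern_weight (S : {set 'I_n}) : R := p ^+ #|S| * (1 - p) ^+ (n - #|S|).

Definition bern_noise (S : {set 'I_n}) (t : 'I_n) : R := (if t \in S then p^-1 else 0) - 1.

Lemma bern_probE (E : pred {set 'I_n}) : bern_prob p E = \sum_(S | E S) bern_weight S.
Proof. by []. Qed.

Lemma bern_weightE S : bern_weight S = \prod_t (if t \in S then p else 1 - p).
Proof.
rewrite (bigID (mem S)) /=.
rewrite [X in X * _](eq_bigr (fun _ => p)); last by move=> t ->.
rewrite [X in _ * X](eq_bigr (fun _ => 1 - p)); last by move=> t /negPf ->.
rewrite !prodr_const /bern_weight; congr (_ * _ ^+ _).
rewrite -[n in (n - _)%N](card_ord n) -(cardC S) addKn.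
by apply: eq_card => t; rewrite !inE.
Qed.

Lemma sum_set_prod (f : 'I_n -> bool -> R) :
  \sum_(S : {set 'I_n}) \prod_t f t (t \in S) = \prod_t (f t true + f t false).
Proof.
rewrite (eq_bigr (fun t => \sum_(c : bool) f t c)) => [|t _]; last by rewrite big_bool.
rewrite bigA_distr_bigA /=.
pose indicator (S : {set 'I_n}) : {ffun 'I_n -> bool} := [ffun t => t \in S].
have indicator_bij : bijective indicator.
  exists (fun g : {ffun 'I_n -> bool} => [set t | g t]) => [S|g].
    by apply/setP => t; rewrite inE ffunE.
  by apply/ffunP => t; rewrite ffunE inE.
rewrite (reindex indicator (onW_bij _ indicator_bij)) /=; apply: eq_bigr => S _.
by apply: eq_bigr => t _; rewrite ffunE.
Qed.

Lemma sum_bern_weight_prod (f : 'I_n -> bool -> R) :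
  \sum_S bern_weight S * \prod_t f t (t \in S) =
  \prod_t (p * f t true + (1 - p) * f t false).
Proof.
rewrite -(sum_set_prod (fun t c => (if c then p else 1 - p) * f t c)).
apply: eq_bigr => S _; rewrite bern_weightE -big_split /=.
by apply: eq_bigr => t _; case: (t \in S).
Qed.

Lemma sum_bern_weight : \sum_S bern_weight S = 1.
Proof.
transitivity (\prod_(t < n) (p * 1 + (1 - p) * 1)).
  rewrite -(sum_bern_weight_prod (fun _ _ => 1)); apply: eq_bigr => S _.
  by rewrite big1_eq mulr1.
by rewrite big1 // => t _; rewrite !mulr1 addrC subrK.
Qed.

Hypothesis p01 : 0 <= p <= 1.

Lemma bern_weight_ge0 S : 0 <= bern_weight S.
Proof. by case/andP: p01 => p0 p1; rewrite mulr_ge0 ?exprn_ge0 ?subr_ge0. Qed.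

Lemma bern_prob_ge0 (E : pred {set 'I_n}) : 0 <= bern_prob p E.
Proof. by apply: sumr_ge0 => S _; exact: bern_weight_ge0. Qed.

Lemma le_bern_prob (E F : pred {set 'I_n}) :
  (forall S, E S -> F S) -> bern_prob p E <= bern_prob p F.
Proof.
move=> EF; rewrite !bern_probE [leLHS]big_mkcond [leRHS]big_mkcond /=.
apply: ler_sum => S _; case: ifP => [/EF -> //|_].
by case: ifP; rewrite ?bern_weight_ge0.
Qed.

Lemma bern_prob_predT : bern_prob p (xpredT : pred {set 'I_n}) = 1.
Proof. exact: sum_bern_weight. Qed.

Lemma bern_prob_union_bound (J : finType) (E : pred {set 'I_n})
    (bad : J -> pred {set 'I_n}) :
  (forall S, ~~ E S -> exists j, bad j S) ->
  1 - \sum_j bern_prob p (bad j) <= bern_prob p E.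
Proof.
move=> cover.
rewrite -sum_bern_weight (bigID E) /= -bern_probE -addrA gerDl subr_le0.
rewrite [X in _ <= X](eq_bigr (fun j => \sum_S (bad j S)%:R * bern_weight S)) => [|j _].
  rewrite exchange_big /= big_mkcond /=; apply: ler_sum => S _.
  have sum_ge0 (J' : {pred J}) : 0 <= \sum_(j in J') (bad j S)%:R * bern_weight S.
    by apply: sumr_ge0 => i _; rewrite mulr_ge0 ?ler0n ?bern_weight_ge0.
  case: ifP => [/cover [j badj]|_]; last exact: sum_ge0.
  by rewrite (bigD1 j) //= badj mul1r lerDl sum_ge0.
rewrite bern_probE big_mkcond; apply: eq_bigr => S _.
by case: (bad j S); rewrite ?mul1r ?mul0r.
Qed.

End Bernoulli.

Section Chernoff.
Variable R : realType.

Lemma expR_le_quad (x : R) : x <= 1 -> expR x <= 1 + x + 2 * x ^+ 2.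
Proof.
(* [expR x <= (1 - x / 2) ^- 2] and [(1 - x / 2) ^+ 2 * (1 + x + 2 * x ^+ 2) >= 1]. *)
move=> x1; have ex_gt0 := expR_gt0 x.
have half_ge0 : 0 <= 1 - x / 2 by lra.
have expNx_ge : (1 - x / 2) ^+ 2 <= expR (- x).
  have -> : - x = - x / 2 + - x / 2 by field.
  rewrite expRD -expr2 ler_pXn2r ?nnegrE ?expR_ge0 //.
  by have := expR_ge1Dx (- x / 2); rewrite mulNr.
have ex_le : expR x * (1 - x / 2) ^+ 2 <= 1.
  by rewrite -[leRHS](expRxMexpNx_1 x) ler_wpM2l ?expNx_ge // ltW.
have quad_ge : 1 <= (1 - x / 2) ^+ 2 * (1 + x + 2 * x ^+ 2).
  have : 0 <= x ^+ 2 * ((1 - x) * (5 - 2 * x)) by rewrite mulr_ge0 ?sqr_ge0 ?mulr_ge0 //; lra.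
  have -> : (1 - x / 2) ^+ 2 * (1 + x + 2 * x ^+ 2) =
            1 + x ^+ 2 * ((1 - x) * (5 - 2 * x)) / 4 by field.
  lra.
apply: le_trans (_ : expR x * ((1 - x / 2) ^+ 2 * (1 + x + 2 * x ^+ 2)) <= _).
  by rewrite ler_peMr // ltW.
rewrite mulrA -[leRHS]mul1r ler_wpM2r //.
by have := sqr_ge0 (x + 1 / 4); lra.
Qed.

Lemma bern_mgf_le (p lam b : R) : 0 < p <= 1 -> 0 <= lam -> lam * `|b| / p <= 1 ->
  p * expR (lam * ((p^-1 - 1) * b)) + (1 - p) * expR (lam * (- b))
  <= expR (2 * lam ^+ 2 / p * b ^+ 2).
Proof.
(* [expR_le_quad] on both exponents; the first-order terms cancel because the
   noise is centred. *)
case/andP => p_gt0 p1 lam0 small.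
set q := p^-1; set u := lam * b.
have pq : p * q = 1 by rewrite mulfV ?gt_eqF.
have q1 : 1 <= q by rewrite invr_ge1 ?unitfE ?gt_eqF.
have uq : `|u| * q <= 1 by rewrite normrM (ger0_norm lam0).
have u_le : `|u| <= `|u| * q by rewrite ler_peMr.
have uq1 : u * (q - 1) <= 1.
  apply: le_trans (_ : `|u| * (q - 1) <= _); first by rewrite ler_wpM2r ?subr_ge0 ?ler_norm.
  by rewrite mulrBr mulr1; have := normr_ge0 u; lra.
have Nu1 : - u <= 1 by apply: le_trans (ler_norm _) _; rewrite normrN; lra.
rewrite (_ : lam * ((q - 1) * b) = u * (q - 1)); last by rewrite /u; ring.
rewrite (_ : lam * (- b) = - u); last by rewrite /u; ring.
rewrite (_ : 2 * lam ^+ 2 / p * b ^+ 2 = 2 * u ^+ 2 * (q - 1) + 2 * u ^+ 2); last first.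
  by rewrite /u /q; field; rewrite gt_eqF.
apply: le_trans (_ : p * (1 + u * (q - 1) + 2 * (u * (q - 1)) ^+ 2) +
                     (1 - p) * (1 + - u + 2 * (- u) ^+ 2) <= _).
  by apply: lerD; apply: ler_wpM2l; rewrite ?subr_ge0 ?(ltW p_gt0) ?expR_le_quad.
have -> : p * (1 + u * (q - 1) + 2 * (u * (q - 1)) ^+ 2) + (1 - p) * (1 + - u + 2 * (- u) ^+ 2)
          = 1 + 2 * u ^+ 2 * (q - 1).
  transitivity (p + (p * q) * u - p * u + 2 * u ^+ 2 * ((p * q) * q - 2 * (p * q) + p) +
                (1 - p) * (1 - u + 2 * u ^+ 2)); first by ring.
  by rewrite pq; ring.
apply: le_trans (expR_ge1Dx _) _.
by rewrite ler_expR lerDl mulr_ge0 ?sqr_ge0.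
Qed.

Variables (n : nat) (p : R) (b : 'I_n -> R).
Hypothesis p01 : 0 < p <= 1.
Let p01' : 0 <= p <= 1. Proof. by case/andP: p01 => /ltW -> ->. Qed.

Lemma bern_chernoff (lam s : R) : 0 <= lam -> (forall t, lam * `|b t| / p <= 1) ->
  bern_prob p (fun S => s < \sum_t bern_noise p S t * b t)
  <= expR (2 * lam ^+ 2 / p * \sum_t b t ^+ 2 - lam * s).
Proof.
move=> lam0 small; set X := fun S => \sum_t bern_noise p S t * b t.
pose f t (c : bool) := expR (lam * (((if c then p^-1 else 0) - 1) * b t)).
have markov : bern_prob p (fun S => s < X S) <=
              \sum_S bern_weight p S * expR (lam * (X S - s)).
  rewrite bern_probE big_mkcond /=; apply: ler_sum => S _.
  have w0 := bern_weight_ge0 p01' S.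
  case: ifP => sX; last by rewrite mulr_ge0 ?expR_ge0.
  by rewrite ler_peMr // -expR0 ler_expR mulr_ge0 // subr_ge0 ltW.
have factor : \sum_S bern_weight p S * expR (lam * (X S - s)) =
              expR (- (lam * s)) * \prod_t (p * f t true + (1 - p) * f t false).
  rewrite -(sum_bern_weight_prod p f) mulr_sumr; apply: eq_bigr => S _.
  rewrite mulrCA; congr (_ * _).
  by rewrite mulrBr expRD mulrC /X mulr_sumr expR_sum.
apply: le_trans markov _; rewrite factor [in leRHS]addrC expRD mulr_sumr expR_sum.
rewrite ler_wpM2l ?expR_ge0 //; apply: ler_prod => t _.
case/andP: p01' => p0 p1.
by rewrite /f sub0r mulN1r addr_ge0 ?mulr_ge0 ?expR_ge0 ?subr_ge0 ?bern_mgf_le.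
Qed.

Lemma bern_noise_tail (tau L : R) : 0 < tau -> 0 < L ->
  (forall t, L * `|b t| <= p * tau) -> L * \sum_t b t ^+ 2 <= p * tau ^+ 2 ->
  bern_prob p (fun S => 4 * tau < \sum_t bern_noise p S t * b t) <= expR (- (2 * L)).
Proof.
move=> tau0 L0 b_small b_sum; case/andP: p01 => p0 _.
have ptau0 : 0 < p * tau by rewrite mulr_gt0.
apply: le_trans (@bern_chernoff (L / tau) (4 * tau) _ _) _.
- by rewrite divr_ge0 ?(ltW L0) ?(ltW tau0).
- move=> t; rewrite (_ : L / tau * `|b t| / p = L * `|b t| / (p * tau)); last first.
    by field; rewrite !gt_eqF.
  by rewrite ler_pdivrMr // mul1r.
rewrite ler_expR.
have -> : L / tau * (4 * tau) = 4 * L by field; rewrite gt_eqF.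
have : 2 * (L / tau) ^+ 2 / p * \sum_t b t ^+ 2 <= 2 * L.
  rewrite (_ : 2 * (L / tau) ^+ 2 / p * _ = 2 * L * (L * (\sum_t b t ^+ 2) / (p * tau ^+ 2))).
    rewrite -[leRHS]mulr1 ler_wpM2l ?mulr_ge0 ?(ltW L0) //.
    by rewrite ler_pdivrMr ?mul1r ?mulr_gt0 ?exprn_gt0.
  by field; rewrite !gt_eqF.
lra.
Qed.

End Chernoff.

Section Directions.
Variable R : realType.
Local Notation C := R[i].

Lemma Re_sum (I : finType) (F : I -> C) : complex.Re (\sum_i F i) = \sum_i complex.Re (F i).
Proof.
apply: (big_rec2 (fun (y : R) (x : C) => complex.Re x = y)) => // i y x _ <-.
by case: x; case: (F i).
Qed.

Lemma Re_realM (r : R) (c : C) : complex.Re (r%:C * c) = r * complex.Re c.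
Proof. by case: c => a b /=; rewrite mul0r subr0. Qed.

Lemma normc_le_Re_Im (c : C) : normc c <= `|complex.Re c| + `|complex.Im c|.
Proof.
case: c => a b /=; rewrite -(ger0_norm (addr_ge0 (normr_ge0 a) (normr_ge0 b))).
rewrite -sqrtr_sqr ler_sqrt ?sqr_ge0 // -(real_normK (num_real a)) -(real_normK (num_real b)).
by have := normr_ge0 a; have := normr_ge0 b; nra.
Qed.

Lemma normr_Re_le (c : C) : `|complex.Re c| <= normc c.
Proof.
case: c => a b /=; rewrite -sqrtr_sqr ler_sqrt ?addr_ge0 ?sqr_ge0 //.
by rewrite lerDl sqr_ge0.
Qed.

(* For [d = 0, 1, 2, 3], [Re (w * 'i ^+ d)] is [Re w], [- Im w], [- Re w], [Im w]. *)
Lemma normc_le_directions (w : C) (s : R) :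
  (forall d : 'I_4, complex.Re (w * 'i%C ^+ d) <= s) -> normc w <= s + s.
Proof.
move=> ws; apply: le_trans (normc_le_Re_Im w) _.
have := ws (inord 0); have := ws (inord 1); have := ws (inord 2); have := ws (inord 3).
rewrite !inordK // expr0 mulr1 !exprS expr0 mulr1.
clear ws; case: w => a b /=.
rewrite !(mul0r, mulr0, mul1r, mulr1, subr0, add0r, addr0, sub0r, mulrN1).
by move=> *; apply: lerD; rewrite ler_norml; apply/andP; split; lra.
Qed.

Lemma normr_Re_direction_le (c : C) (d : nat) : `|complex.Re (c * 'i%C ^+ d)| <= normc c.
Proof.
apply: le_trans (normr_Re_le _) _.
suff -> : normc (c * 'i%C ^+ d) = normc c by [].
apply: complexI; rewrite -!normC_normc normrM normrX (_ : `|'i%C| = 1) ?expr1n ?mulr1 //.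
by rewrite normC_normc /= expr0n expr1n add0r sqrtr1.
Qed.

End Directions.

Section HankelSampling.
Variable R : realType.
Local Notation C := R[i].
Variables (n1 n2 : nat) (p : R).
Local Notation n := (n1 + n2).-1.

Definition sampling_error (S : {set 'I_n}) (x : 'cV[C]_n) : 'cV[C]_n :=
  (p^-1)%:C *: PiOmega S x - x.

Lemma sampling_error0 S : sampling_error S 0 = 0.
Proof.
rewrite /sampling_error subr0; apply/matrixP => t j.
by rewrite !mxE; case: ifP; rewrite mulr0.
Qed.

Lemma sampling_errorE S x t :
  sampling_error S x t ord0 = (bern_noise p S t)%:C * x t ord0.
Proof.
rewrite !mxE /bern_noise rmorphB /= mulrBl mul1r.
by case: (t \in S); rewrite ?mulr0 ?mul0r.
Qed.

Lemma Gop_sampling_error z S :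
  (p^-1)%:C *: Gop n1 n2 (PiOmega S z) - Gop n1 n2 z =
  hankel n1 n2 (sampling_error S (Dinv n1 n2 z)).
Proof.
apply/matrixP => i j; rewrite hankelE sampling_errorE.
rewrite !mxE /vget !(big_pred1 (Ordinal (add_ord_lt i j))) // !mxE /bern_noise.
by case: (_ \in S); rewrite rmorphB /= rmorph1 /=; ring.
Qed.

Definition dft_direction (om : C) (x : 'cV[C]_n) (kd : 'I_n * 'I_4) (t : 'I_n) : R :=
  complex.Re (x t ord0 * om ^+ (kd.1 * t) * 'i%C ^+ kd.2).

Lemma Re_dft_sampling_error om S x (kd : 'I_n * 'I_4) :
  complex.Re (dft om (fun t => sampling_error S x t ord0) kd.1 * 'i%C ^+ kd.2) =
  \sum_t bern_noise p S t * dft_direction om x kd t.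
Proof.
rewrite /dft mulr_suml Re_sum; apply: eq_bigr => t _.
by rewrite sampling_errorE -!mulrA Re_realM !mulrA.
Qed.

Lemma normr_dft_direction_le om x kd t : n.-primitive_root om ->
  `|dft_direction om x kd t| <= normc (x t ord0).
Proof.
move=> om_prim; rewrite -(normc_mul_prim_rootX om_prim _ (kd.1 * t)).
exact: normr_Re_direction_le.
Qed.

Lemma specnorm_hankel_sampling_error_le om S x s :
  (0 < n1)%N -> (0 < n2)%N -> n.-primitive_root om ->
  (forall kd, \sum_t bern_noise p S t * dft_direction om x kd t <= s) ->
  specnorm (hankel n1 n2 (sampling_error S x)) <= s + s.
Proof.
move=> n1_gt0 n2_gt0 om_prim good; apply: (specnorm_hankel_le n1_gt0 n2_gt0 om_prim) => k.
by apply: normc_le_directions => d; rewrite (Re_dft_sampling_error _ _ _ (k, d)).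
Qed.

Lemma hankel_sampling_error_tail (x : 'cV[C]_n) (tau : R) :
  (0 < n1)%N -> (0 < n2)%N -> (1 < n)%N -> 0 < p <= 1 -> 0 < tau ->
  (forall t, 2 * ln n%:R * normc (x t ord0) <= p * tau) ->
  2 * ln n%:R * \sum_t normc (x t ord0) ^+ 2 <= p * tau ^+ 2 ->
  1 - 2 / n%:R ^+ 2 <=
  bern_prob p (fun S => specnorm (hankel n1 n2 (sampling_error S x)) <= 8 * tau).
Proof.
move=> n1_gt0 n2_gt0 n_gt1 p01 tau0 x_small x_sum.
have [om om_prim] : exists om : C, n.-primitive_root om.
  by apply: closed_prim_root_exists (ltnW n_gt1) _; rewrite pnatr_eq0 -lt0n ltnW.
have nR_gt0 : (0 : R) < n%:R by rewrite ltr0n ltnW.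
set L := 2 * ln (n%:R : R).
have L_gt0 : 0 < L by rewrite mulr_gt0 // ln_gt0 // ltr1n.
pose bad kd S := 4 * tau < \sum_t bern_noise p S t * dft_direction om x kd t.
have cover S : ~~ (specnorm (hankel n1 n2 (sampling_error S x)) <= 8 * tau) ->
               exists kd, bad kd S.
  apply: contraNP => /forallNP good; rewrite (_ : 8 * tau = 4 * tau + 4 * tau); last by ring.
  by apply: specnorm_hankel_sampling_error_le om_prim _ => // kd; rewrite leNgt; apply/negP/good.
have bad_tail kd : bern_prob p (bad kd) <= (n%:R ^+ 4)^-1.
  have -> : (n%:R ^+ 4)^-1 = expR (- (2 * L)) :> R.
    rewrite /L (_ : 2 * (2 * _) = 4%:R * ln (n%:R : R)); last by ring.
    by rewrite expRN expRM_natl lnK // posrE.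
  apply: bern_noise_tail => // [t|].
    apply: le_trans _ (x_small t); apply: (ler_wpM2l (ltW L_gt0)).
    exact: normr_dft_direction_le.
  apply: le_trans _ x_sum; apply: (ler_wpM2l (ltW L_gt0)); apply: ler_sum => t _.
  by rewrite -real_normK ?num_real // ler_pXn2r ?nnegrE ?normc_ge0 ?normr_dft_direction_le.
have p01' : 0 <= p <= 1 by case/andP: p01 => /ltW -> ->.
apply: le_trans _ (bern_prob_union_bound p01' cover).
rewrite lerD2l lerN2; apply: le_trans (ler_sum _ (fun kd _ => bad_tail kd)) _.
rewrite sumr_const card_prod !card_ord.
have -> : (n%:R ^+ 4)^-1 *+ (n * 4) = 2 / n%:R ^+ 2 * (2 / n%:R) :> R.
  by field; rewrite gt_eqF.
rewrite ler_piMr ?divr_ge0 ?exprn_ge0 ?ler0n // ler_pdivrMr // mul1r.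
by rewrite ler_nat.
Qed.

End HankelSampling.

Lemma add_ord_cover n1 n2 (t : 'I_(n1 + n2).-1) : (0 < n1)%N -> (0 < n2)%N ->
  exists (i : 'I_n1) (j : 'I_n2), Ordinal (add_ord_lt i j) = t.
Proof.
move=> n1_gt0 n2_gt0; have t_lt := ltn_ord t.
have i_lt : (minn t n1.-1 < n1)%N by rewrite gtn_min; apply/orP; right; lia.
have j_lt : (t - minn t n1.-1 < n2)%N by lia.
by exists (Ordinal i_lt), (Ordinal j_lt); apply: val_inj => /=; lia.
Qed.

(* Every anti-diagonal [t] of an [n1 x n2] Hankel matrix meets its first row
   ([t < n2]) or its last column ([n2.-1 <= t]). *)
Lemma sum_le_row_col (R : realType) n1 n2 (F : nat -> R) : (0 < n1)%N -> (0 < n2)%N ->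
  (forall t, 0 <= F t) ->
  \sum_(t < (n1 + n2).-1) F t <= \sum_(j < n2) F j + \sum_(i < n1) F (i + n2.-1)%N.
Proof.
move=> n1_gt0 n2_gt0 F_ge0.
have last_col : \sum_(n2.-1 <= t < (n1 + n2).-1) F t = \sum_(i < n1) F (i + n2.-1)%N.
  rewrite -{1}[n2.-1]add0n big_addn (_ : ((n1 + n2).-1 - n2.-1)%N = n1) ?big_mkord //.
  lia.
rewrite -(big_mkord xpredT F) (big_cat_nat _ (n := n2)) //=; last by lia.
rewrite big_mkord lerD2l -last_col (@big_ltn R 0 +%R n2.-1); last by lia.
by rewrite prednK // lerDr.
Qed.

Section HankelIncoherence.
Variable R : realType.
Local Notation C := R[i].
Variables (n1 n2 r : nat) (x : 'cV[C]_(n1 + n2).-1) (nu : R).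
Variables (U : 'M[C]_(n1, r)) (V : 'M[C]_(n2, r)).
Local Notation A := (hankel n1 n2 x).
Local Notation K := (specnorm A).
Hypotheses (n1_gt0 : (0 < n1)%N) (n2_gt0 : (0 < n2)%N).
Hypotheses (UU : adjmx U *m U = 1%:M) (VV : adjmx V *m V = 1%:M).
Hypotheses (AU : U *m (adjmx U *m A) = A) (AV : A *m (V *m adjmx V) = A).
Hypotheses (U_inc : norm2inf U <= nu) (V_inc : norm2inf V <= nu).

Lemma normc_hankel_coef_le t : normc (x t ord0) <= nu ^+ 2 * K.
Proof.
have [i [j <-]] := add_ord_cover t n1_gt0 n2_gt0.
rewrite -hankelE; apply: le_trans (normc_entry_le UU VV AU AV i j) _.
have Ui := le_trans (rownorm_le_norm2inf U i) U_inc.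
have Vj := le_trans (rownorm_le_norm2inf V j) V_inc.
rewrite expr2 mulrAC ler_pM ?mulr_ge0 ?rownorm_ge0 ?specnorm_ge0 //.
by rewrite ler_pM ?rownorm_ge0 ?specnorm_ge0.
Qed.

Lemma sum_hankel_coef_le : \sum_t normc (x t ord0) ^+ 2 <= 2 * (nu ^+ 2 * K ^+ 2).
Proof.
pose i0 : 'I_n1 := Ordinal n1_gt0.
have Ui0 := le_trans (rownorm_le_norm2inf U i0) U_inc.
have nu_ge0 : 0 <= nu := le_trans (rownorm_ge0 U i0) Ui0.
rewrite (eq_bigr (fun t : 'I_ _ => normc (vget x t) ^+ 2)) => [|t _]; last first.
  by rewrite /vget (big_pred1 t).
apply: le_trans (sum_le_row_col (F := fun t => normc (vget x t) ^+ 2) n1_gt0 n2_gt0 _) _.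
  by move=> t; exact: sqr_ge0.
rewrite mulr2n mulrDl mul1r -!exprMn; apply: lerD.
  rewrite (eq_bigr (fun j => normc (A i0 j) ^+ 2)) => [|j _]; last by rewrite mxE.
  apply: le_trans (sum_row_le UU AU i0) _.
  rewrite ler_pXn2r ?nnegrE ?mulr_ge0 ?rownorm_ge0 ?specnorm_ge0 //.
  by rewrite ler_wpM2r ?specnorm_ge0.
have j0_lt : (n2.-1 < n2)%N by rewrite ltn_predL.
pose j0 : 'I_n2 := Ordinal j0_lt.
rewrite (eq_bigr (fun i => normc (A i j0) ^+ 2)) => [|i _]; last by rewrite mxE.
apply: le_trans (sum_col_le VV AV j0) _.
rewrite [nu * _]mulrC ler_pXn2r ?nnegrE ?mulr_ge0 ?rownorm_ge0 ?specnorm_ge0 //.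
by rewrite ler_wpM2l ?specnorm_ge0 // (le_trans (rownorm_le_norm2inf V j0)).
Qed.

End HankelIncoherence.

Section GopSampling.
Variable R : realType.
Local Notation C := R[i].
Variables (n1 n2 r : nat) (z : 'cV[C]_((n1 + n2).-1)) (a p : R).
Variables (U : 'M[C]_(n1, r)) (sigma : 'rV[C]_r) (V : 'M[C]_(n2, r)).
Local Notation n := (n1 + n2).-1.
Local Notation g := (Dinv n1 n2 z).
Local Notation K := (specnorm (Gop n1 n2 z)).
Hypotheses (n1_gt0 : (0 < n1)%N) (n2_gt0 : (0 < n2)%N) (n_gt1 : (1 < n)%N).
Hypotheses (UU : adjmx U *m U = 1%:M) (VV : adjmx V *m V = 1%:M).
Hypothesis Gz_svd : Gop n1 n2 z = U *m diag_mx sigma *m adjmx V.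
Hypotheses (U_inc : norm2inf U <= Num.sqrt a) (V_inc : norm2inf V <= Num.sqrt a).
Hypotheses (p01 : 0 < p <= 1) (p_large : a * ln (n%:R : R) / p <= 1).

Let coef_le t : normc (g t ord0) <= Num.sqrt a ^+ 2 * K.
Proof.
apply: (normc_hankel_coef_le n1_gt0 n2_gt0 UU VV _ _ U_inc V_inc);
  by rewrite [hankel _ _ _]Gz_svd ?svd_colspace ?svd_rowspace.
Qed.

Let coef_sum_le : \sum_t normc (g t ord0) ^+ 2 <= 2 * (Num.sqrt a ^+ 2 * K ^+ 2).
Proof.
apply: (sum_hankel_coef_le n1_gt0 n2_gt0 UU VV _ _ U_inc V_inc);
  by rewrite [hankel _ _ _]Gz_svd ?svd_colspace ?svd_rowspace.
Qed.

Local Notation event S c :=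
  (specnorm ((p^-1)%:C *: Gop n1 n2 (PiOmega S z) - Gop n1 n2 z)
     <= c * Num.sqrt (a * ln (n%:R : R) / p) * K).

Let p01' : 0 <= p <= 1. Proof. by case/andP: p01 => /ltW -> ->. Qed.

Let Gop_sampling_error_tail_pos : 0 < a -> 0 < K ->
  1 - 2 / n%:R ^+ 2 <= bern_prob p (fun S => event S 16).
Proof.
move=> a_gt0 K_gt0; have p_gt0 : 0 < p by case/andP: p01.
have sqr_sa : Num.sqrt a ^+ 2 = a by rewrite sqr_sqrtr // ltW.
have g_le t : normc (g t ord0) <= a * K by rewrite -sqr_sa coef_le.
have g_sum_le : \sum_t normc (g t ord0) ^+ 2 <= 2 * (a * K ^+ 2).
  by rewrite -sqr_sa; exact: coef_sum_le.
set l := ln (n%:R : R); have l_gt0 : 0 < l by rewrite ln_gt0 // ltr1n.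
set sg := Num.sqrt (a * l / p).
have al_p_gt0 : 0 < a * l / p by rewrite !mulr_gt0 ?invr_gt0.
have sg_gt0 : 0 < sg by rewrite sqrtr_gt0.
have sqr_sg : a * l = p * sg ^+ 2.
  by rewrite sqr_sqrtr ?ltW // mulrCA mulfV ?gt_eqF // mulr1.
have sg_le1 : sg <= 1 by rewrite -sqrtr1 ler_sqrt.
have sg2_le : 0 <= p * K * (sg - sg ^+ 2).
  apply: mulr_ge0; first by rewrite mulr_ge0 ?(ltW p_gt0) ?(ltW K_gt0).
  by rewrite subr_ge0 expr2 ler_piMr ?(ltW sg_gt0).
(* With [tau = 2 * sg * K] both hypotheses of [hankel_sampling_error_tail]
   reduce to [sg ^+ 2 <= sg]. *)
have tau_gt0 : 0 < 2 * sg * K by rewrite !mulr_gt0.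
apply: le_trans (hankel_sampling_error_tail (x := g) n1_gt0 n2_gt0 n_gt1 p01 tau_gt0 _ _)
                (le_bern_prob p01' _) => [t||S]; rewrite -/l.
- apply: le_trans (ler_wpM2l _ (g_le t)) _; first by rewrite mulr_ge0 ?ltW.
  have : a * l * K = p * sg ^+ 2 * K by rewrite sqr_sg.
  nra.
- apply: le_trans (ler_wpM2l _ g_sum_le) _; first by rewrite mulr_ge0 ?ltW.
  have : a * l * K ^+ 2 = p * sg ^+ 2 * K ^+ 2 by rewrite sqr_sg.
  nra.
by rewrite Gop_sampling_error (_ : 16 * sg * K = 8 * (2 * sg * K)) //; ring.
Qed.

Lemma Gop_sampling_error_tail : 1 - 2 / n%:R ^+ 2 <= bern_prob p (fun S => event S 16).
Proof.
have [c_gt0|c_le0] := ltP 0 (Num.sqrt a ^+ 2 * K); last first.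
  have g0 : g = 0.
    apply/matrixP => t j; rewrite (ord1 j) [RHS]mxE; apply: ComplexField.Normc.eq0_normc.
    by apply/eqP; rewrite eq_le normc_ge0 andbT (le_trans (coef_le t)).
  apply: le_trans _ (le_bern_prob p01' (E := xpredT) _) => [|S _].
    by rewrite bern_prob_predT gerBl divr_ge0 ?exprn_ge0 ?ler0n.
  rewrite Gop_sampling_error g0 sampling_error0 hankel0 specnorm0.
  by rewrite !mulr_ge0 ?sqrtr_ge0 ?specnorm_ge0.
apply: Gop_sampling_error_tail_pos.
  rewrite -sqrtr_gt0 lt_def sqrtr_ge0 andbT.
  by apply: contraTneq c_gt0 => ->; rewrite expr0n mul0r ltxx.
rewrite lt_def specnorm_ge0 andbT.
by apply: contraTneq c_gt0 => ->; rewrite mulr0 ltxx.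
Qed.

End GopSampling.

Theorem lemma1 (R : realType) :
  exists c0 : R, 0 < c0 /\
  forall (n1 n2 r : nat) (mu p : R)
    (z : 'cV[R[i]]_((n1 + n2).-1))
    (U : 'M[R[i]]_(n1, r)) (sigma : 'rV[R[i]]_r) (V : 'M[R[i]]_(n2, r)),
    (0 < n1)%N -> (0 < n2)%N ->
    let n := (n1 + n2).-1 in
    let cs := Num.max (n%:R / n1%:R) (n%:R / n2%:R) : R in
    \rank (Gop n1 n2 z) = r ->
    adjmx U *m U = 1%:M ->
    adjmx V *m V = 1%:M ->
    (forall k : 'I_r, 0 < sigma ord0 k) ->
    Gop n1 n2 z = U *m diag_mx sigma *m adjmx V ->
    norm2inf U <= Num.sqrt (mu * cs * r%:R / n%:R) ->
    norm2inf V <= Num.sqrt (mu * cs * r%:R / n%:R) ->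
    0 < p <= 1 ->
    mu * cs * r%:R * ln (n%:R) / n%:R <= p ->
    bern_prob p (fun S : {set 'I_n} =>
      specnorm ((real_complex R p^-1) *: Gop n1 n2 (PiOmega S z) - Gop n1 n2 z)
        <= c0 * Num.sqrt (p^-1 * mu * cs * r%:R * ln (n%:R) / n%:R)
              * specnorm (Gop n1 n2 z))
    >= 1 - 2 / n%:R ^+ 2.
Proof.
exists 16; split => // n1 n2 r mu p z U sigma V n1_gt0 n2_gt0 n cs _ UU VV _ Gz U_inc V_inc.
move=> p01 p_large; set a := mu * cs * r%:R / n%:R in U_inc V_inc.
have p01' : 0 <= p <= 1 by case/andP: p01 => /ltW -> ->.
have [n_le1|n_gt1] := leqP n 1.
  have -> : n%:R = 1 :> R by apply/eqP; rewrite pnatr_eq1 eqn_leq n_le1 /n; lia.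
  apply: le_trans _ (bern_prob_ge0 p01' _).
  by rewrite expr1n divr1 subr_le0 ler1n.
rewrite (_ : p^-1 * mu * cs * r%:R * ln n%:R / n%:R = a * ln (n%:R : R) / p); last first.
  by rewrite /a; ring.
apply: (Gop_sampling_error_tail n1_gt0 n2_gt0 n_gt1 UU VV Gz U_inc V_inc p01).
case/andP: p01 => p_gt0 _; rewrite ler_pdivrMr // mul1r.
by rewrite (_ : a * _ = mu * cs * r%:R * ln n%:R / n%:R) // /a; ring.
Qed.
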